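(* The Greedy Maximizer policy is a $2$-approximation policy; that is, for every system with minimum average reward requirements $[q^*_X : X\in S]$ such that the same system with requirements $[2q^*_X]$ is strictly feasible, the Greedy Maximizer fulfills the system with requirements $[q^*_X]$.
   Context: A system consists of a finite set $S$ of tasks. Time is slotted, $t\in\{0,1,2,\dots\}$. Each task $X\in S$ has a period $\tau_X$ (a positive integer); time is partitioned into consecutive periods of $X$ of $\tau_X$ slots each, the first starting at $t=0$, and in each period $X$ has one job, removed at the end of the period. Let $T=\mathrm{lcm}\{\tau_X : X\in S\}$; time is partitioned into consecutive frames of $T$ slots each, the $k$-th frame ($k=1,2,\dots$) being the $k$-th such block starting from $t=0$. A scheduling policy chooses in each slot either to idle or to execute the job of exactly one task. Each task $X$ has rewards $r^1_X\ge r^2_X\ge\dots\ge r^{\tau_X}_X\ge 0$: executing the job of $X$ for the $i$-th time within a period yields reward $r^i_X$ to $X$. Let $s_X(t)$ be the total reward obtained by $X$ between time 0 and $t$; the average reward is $q_X=\liminf_{t\to\infty}s_X(t)/(t/T)$. Each task has a minimum requirement $q^*_X>0$; a policy fulfills the system if $q_X\ge q^*_X$ with probability 1 for all $X\in S$. The system is feasible if some policy fulfills it, and strictly feasible if there is $\epsilon>0$ such that the same system with requirements $[(1+\epsilon)q^*_X]$ is feasible. For $p\ge1$, a $p$-approximation policy is one that fulfills every system with requirements $[q^*_X]$ such that the same system with requirements $[p\,q^*_X]$ is strictly feasible. Let $\tilde q_X(k)$ be the total reward obtained by $X$ during the $k$-th frame. The debt of $X$ is $d_X(0)=0$, $d_X(k)=[d_X(k-1)+q^*_X-\tilde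 q_X(k)]^+$ for $k>0$, with $[x]^+=\max\{x,0\}$. The Greedy Maximizer policy is the following: at the start of each frame the debts are updated by the recursion above (initially all debts are $0$); during the frame, in each time slot, letting $i_X$ denote the number of times the job of $X$ has already been executed in its current period (reset to $0$ at the start of each period of $X$), the policy executes the job of a task $Y\in S$ maximizing $r^{i_Y+1}_Y\,d_Y$ over $X\in S$ (using the current debts $d_X$), with ties broken arbitrarily. *)

From HB Require Import structures.
From mathcomp Require Import all_boot all_order all_algebra.
From mathcomp Require Import all_classical all_reals.
From mathcomp Require Import ereal sequences.
Set Implicit Arguments. Unset Strict Implicit. Unset Printing Implicit Defensive.
Import Order.TTheory GRing.Theory Num.Theory.
Local Open Scope ring_scope.

Section System.
Variables (R : realType) (S : finType).
(* periods tau X (>0) and rewards r X i, i = 1..tau X *)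
Variables (tau : S -> nat) (r : S -> nat -> R).

(* A schedule: in each slot t, idle (None) or execute the job of one task. *)
Definition schedule := nat -> option S.

Definition frameT : nat := \big[lcmn/1%N]_(X : S) tau X.

(* i_X(t): number of executions of X in its current period before slot t *)
Definition nexec (sc : schedule) (X : S) (t : nat) : nat :=
  #|[set u : 'I_t | (u %/ tau X == t %/ tau X)%N && (sc u == Some X)]|.

Definition slot_reward (sc : schedule) (X : S) (t : nat) : R :=
  if sc t == Some X then r X (nexec sc X t).+1 else 0.

Definition total_reward (sc : schedule) (X : S) (t : nat) : R :=
  \sum_(0 <= u < t) slot_reward sc X u.

Definition avg_reward (sc : schedule) (X : S) : \bar R :=
  limn_einf (fun t : nat => (total_reward sc X t / (t%:R / frameT%:R))%:E).

Definition fulfills (q : S -> R) (sc : schedule) : Prop :=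
  forall X, ((q X)%:E <= avg_reward sc X)%E.

Definition feasible (q : S -> R) : Prop := exists sc : schedule, fulfills q sc.

Definition strictly_feasible (q : S -> R) : Prop :=
  exists eps : R, 0 < eps /\ feasible (fun X => (1 + eps) * q X).

(* reward of X during the k-th frame (k >= 1): slots (k-1)T .. kT-1 *)
Definition frame_reward (sc : schedule) (X : S) (k : nat) : R :=
  \sum_(k.-1 * frameT <= u < k * frameT) slot_reward sc X u.

Fixpoint debt (q : S -> R) (sc : schedule) (X : S) (k : nat) : R :=
  match k with
  | 0 => 0
  | k'.+1 => Num.max (debt q sc X k' + q X - frame_reward sc X k) 0
  end.

(* sc is a run of the Greedy Maximizer (with some tie-breaking): in each slot t,
   lying in frame (t %/ T).+1, whose debts are d(t %/ T), it executes a task Y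
   maximizing r_Y^{i_Y+1} d_Y. *)
Definition greedy_maximizer (q : S -> R) (sc : schedule) : Prop :=
  forall t : nat, exists Y : S,
    sc t = Some Y /\
    forall X : S,
      r X (nexec sc X t).+1 * debt q sc X (t %/ frameT)
      <= r Y (nexec sc Y t).+1 * debt q sc Y (t %/ frameT).

End System.

From HB Require Import structures.
From mathcomp Require Import all_boot all_order all_algebra.
From mathcomp Require Import all_classical all_reals.
From mathcomp Require Import ereal sequences normedtype.
From mathcomp Require Import zify ring lra.
Import Order.TTheory GRing.Theory Num.Theory.
Local Open Scope ring_scope.

(* Fix the debts d at the start of a frame.  In every slot the greedy policy
   maximizes the d-weighted marginal reward, and rewards within a period are
   nonincreasing; an exchange argument, tracking per task how much reward the
   greedy schedule is ahead of a competitor in the current period, shows that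
   the d-weighted greedy reward of a frame is at least half that of any frame of
   any other schedule.  Strict feasibility of 2q yields such a frame worth more
   than (2 + eps) sum d q, so greedy earns (1 + eps/2) sum d q.  Hence the
   Lyapunov function sum d^2 drifts by at most C - eps sum d q per frame, the
   debts stay bounded, and bounded debts mean average reward at least q. *)

Section LiminfBounds.
Variable R : realType.
Local Open Scope classical_set_scope.
Implicit Types (u : nat -> \bar R) (a : \bar R).

Lemma limn_einf_ge_near u a :
  (\forall n \near \oo, (a <= u n)%E) -> (a <= limn_einf u)%E.
Proof.
move=> [N _ aleu]; rewrite limn_einf_lim; apply: lime_ge; first exact: is_cvg_einfs.
exists N => // m /= Nm; apply: le_ereal_inf_tmp => _ [k /= mk <-].
by apply: aleu; apply: leq_trans mk.
Qed.

Lemma lt_limn_einf_near u a :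
  (a < limn_einf u)%E -> \forall n \near \oo, (a < u n)%E.
Proof.
rewrite limn_einf_lim (cvg_lim _ (@cvg_einfs_sup _ u)) // => /ereal_sup_gt.
move=> [_ [m _ <-]] am; exists m => // n /= mn; apply: (lt_le_trans am).
by apply: ereal_inf_lbound; exists n.
Qed.

(* Since [s] is monotone, the ratio at [n] is controlled by the last frame
   boundary [K * T <= n], and [n / T <= K + 1]. *)
Lemma limn_einf_ratio_ge (s : nat -> R) (T : nat) (c D : R) :
  (0 < T)%N -> (forall n, 0 <= s n) -> {homo s : m n / (m <= n)%N >-> m <= n} ->
  (forall K, K%:R * c - D <= s (K * T)%N) ->
  (c%:E <= limn_einf (fun n => (s n / (n%:R / T%:R))%:E))%E.
Proof.
move=> T_gt0 s_ge0 s_homo s_frames; apply/lee_subgt0Pr => e e_gt0.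
have TR : (0 : R) < T%:R by rewrite ltr0n.
have cD_ge0 : 0 <= (`|c| + `|D|) / e by rewrite divr_ge0 // ?ltW // addr_ge0.
set n0 := Num.Def.archi_bound ((`|c| + `|D|) / e).
have n0_gt := archi_boundP cD_ge0; rewrite -/n0 in n0_gt.
apply: limn_einf_ge_near; exists (n0.+1 * T)%N => // n /= n_ge.
rewrite -EFinB lee_fin.
set K := (n %/ T)%N.
have K_ge : (n0.+1 <= K)%N by have := leq_div2r T n_ge; rewrite mulnK.
have n_gt0 : (0 < n)%N by apply: leq_trans n_ge; rewrite muln_gt0.
have nT_gt0 : (0 : R) < n%:R / T%:R by rewrite divr_gt0 // ltr0n.
have nT_le : n%:R / T%:R <= K%:R + 1 :> R.
  by rewrite ler_pdivrMr // natr1 -natrM ler_nat ltnW // ltn_ceil.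
have KeD : `|c| + `|D| < K%:R * e.
  by rewrite -ltr_pdivrMr //; apply: (lt_le_trans n0_gt); rewrite ler_nat ltnW.
have sK := s_frames K; have sKn := s_homo _ _ (leq_divM n T).
rewrite ler_pdivlMr //; case: (leP (c - e) 0) => ce.
  by apply: le_trans (s_ge0 n); apply: mulr_le0_ge0 => //; apply: ltW.
have := ler_norm c; have := ler_norm D; nra.
Qed.

End LiminfBounds.

Lemma exists_ge_average {R : realDomainType} n (F : 'I_n.+1 -> R) (c : R) :
  n.+1%:R * c <= \sum_i F i -> exists i, c <= F i.
Proof.
apply: contraPP => /forallNP F_lt; apply/negP; rewrite -ltNge.
have -> : n.+1%:R * c = \sum_(i < n.+1) c by rewrite sumr_const card_ord mulr_natl.
apply: ltr_sum => [|i _]; first by apply/hasP; exists ord0; rewrite ?mem_index_enum.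
by rewrite ltNge; apply/negP/F_lt.
Qed.

Lemma sqr_max0_subr_le {R : realDomainType} (d : R) {q f : R} : 0 <= q -> 0 <= f ->
  Num.max (d + q - f) 0 ^+ 2 <= d ^+ 2 + 2 * d * q - 2 * d * f + q ^+ 2 + f ^+ 2.
Proof.
move=> q_ge0 f_ge0; have := mulr_ge0 q_ge0 f_ge0; have := sqr_ge0 (d + q - f).
by case: (leP (d + q - f) 0) => _; rewrite ?expr0n /=; nra.
Qed.

Lemma drift_bounded {R : realDomainType} (L V : nat -> R) (B C : R) :
  L 0%N <= B + C -> (forall K, 0 <= V K) -> (forall K, V K < C -> L K <= B) ->
  (forall K, L K.+1 <= L K - V K + C) -> forall K, L K <= B + C.
Proof.
move=> L0 V_ge0 L_small drift; elim=> // K IH.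
have := drift K; have := V_ge0 K.
by case: (ltP (V K) C) => [/L_small|]; lra.
Qed.

Lemma sum_mul_if_some {R : pzSemiRingType} (S : finType) (s : option S)
    (d f : S -> R) :
  \sum_X d X * (if s == Some X then f X else 0) = oapp (fun Y => d Y * f Y) 0 s.
Proof.
case: s => [Y|] /=; last by rewrite big1 // => X _; rewrite mulr0.
rewrite (bigD1 Y) //= eqxx big1 ?addr0 // => X XY.
by case: eqP => [[YX]|]; [by rewrite YX eqxx in XY | rewrite mulr0].
Qed.

Lemma ler_sum_term {R : numDomainType} {I : finType} {F : I -> R} (i : I) :
  (forall j, 0 <= F j) -> F i <= \sum_j F j.
Proof. by move=> F_ge0; rewrite (bigD1 i) //= lerDl sumr_ge0. Qed.

Section Scheduling.
Variables (R : realType) (S : finType) (tau : S -> nat) (r : S -> nat -> R).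
Hypothesis tau_gt0 : forall X, (0 < tau X)%N.

Local Notation T := (frameT tau).

Lemma nexec_count sc X t : nexec tau sc X t =
  count (fun u => (u %/ tau X == t %/ tau X)%N && (sc u == Some X)) (iota 0 t).
Proof.
rewrite /nexec cardsE -sum1_card -sum1_count.
have -> : iota 0 t = index_iota 0 t by rewrite /index_iota subn0.
by rewrite big_mkord; apply: eq_bigl.
Qed.

Lemma nexecS sc X t : nexec tau sc X t.+1 =
  if (tau X %| t.+1)%N then 0%N else (nexec tau sc X t + (sc t == Some X))%N.
Proof.
rewrite !nexec_count -addn1 iotaD count_cat /= add0n addn0 addn1 (divnS _ (tau_gt0 X)).
case: ifP => tau_dvd /=; last by rewrite !add0n eqxx.
rewrite add1n eqn_leq ltnn /= andbF addn0 (@eq_in_count _ _ pred0) ?count_pred0 // => u.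
rewrite mem_iota add0n => /andP[_ ut] /=.
by rewrite eqn_leq ltnNge leq_div2r ?andbF // ltnW.
Qed.

Lemma nexec_le_mod sc X t : (nexec tau sc X t <= t %% tau X)%N.
Proof.
elim: t => [|t IH]; first by rewrite nexec_count.
rewrite nexecS modnS; case: ifP => // _.
by rewrite -addn1 leq_add // leq_b1.
Qed.

Lemma nexec_lt_period sc X t : (nexec tau sc X t < tau X)%N.
Proof. by rewrite (leq_ltn_trans (nexec_le_mod sc X t)) // ltn_mod. Qed.

Lemma nexec_period_start sc X t : (tau X %| t)%N -> nexec tau sc X t = 0%N.
Proof. by move=> /eqP tau_dvd; apply/eqP; rewrite -leqn0 -tau_dvd nexec_le_mod. Qed.

Lemma frameT_gt0 : (0 < T)%N.
Proof.
apply: (big_ind (fun n => 0 < n)%N) => // m n.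
by rewrite lcmn_gt0 => -> ->.
Qed.

Lemma dvdn_frameT X : (tau X %| T)%N.
Proof. exact: (@biglcmn_sup _ X xpredT tau (tau X) isT (dvdnn _)). Qed.

Lemma frame_rewardE sc X k : frame_reward tau r sc X k.+1 =
  \sum_(u < T) slot_reward tau r sc X (k * T + u)%N.
Proof.
rewrite /frame_reward /= -{1}(add0n (k * T)%N) big_addn mulSn (addnC T) addKn.
by rewrite big_mkord; apply: eq_bigr => u _; rewrite addnC.
Qed.

Lemma total_reward_frames sc X K : total_reward tau r sc X (K * T)%N =
  \sum_(k < K) frame_reward tau r sc X k.+1.
Proof.
elim: K => [|K IH]; first by rewrite mul0n /total_reward big_ord0 big_geq.
rewrite big_ord_recr /= -IH /total_reward /frame_reward /=.
by rewrite (big_cat_nat (n := (K * T)%N)) //= leq_mul2r leqnSn orbT.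
Qed.

Lemma debt_ge0 q sc X K : 0 <= debt tau r q sc X K.
Proof. by case: K => //= K; rewrite le_max lexx orbT. Qed.

(* The debt recursion only discards a nonnegative amount, so the rewards
   collected over [K] frames cover [K q] up to the current debt. *)
Lemma total_reward_ge_debt q sc X K :
  K%:R * q X - debt tau r q sc X K <= total_reward tau r sc X (K * T)%N.
Proof.
elim: K => [|K IH]; first by rewrite mul0n /total_reward big_geq //= mul0r subrr.
rewrite total_reward_frames big_ord_recr /= -total_reward_frames -natr1 mulrDl mul1r.
move: IH; set d := debt tau r q sc X K; set f := frame_reward tau r sc X K.+1.
have : d + q X - f <= Num.max (d + q X - f) 0 by rewrite le_max lexx.
lra.
Qed.

Hypothesis r_ge0 : forall X i, (1 <= i <= tau X)%N -> 0 <= r X i.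
Hypothesis r_homo :
  forall X i j, (1 <= i)%N -> (i <= j)%N -> (j <= tau X)%N -> r X j <= r X i.

Lemma slot_reward_ge0 sc X t : 0 <= slot_reward tau r sc X t.
Proof. by rewrite /slot_reward; case: ifP => // _; rewrite r_ge0 // nexec_lt_period. Qed.

Lemma slot_reward_le sc X t : slot_reward tau r sc X t <= r X 1%N.
Proof.
rewrite /slot_reward; case: ifP => _; first by rewrite r_homo // nexec_lt_period.
by rewrite r_ge0 // tau_gt0.
Qed.

Lemma frame_reward_ge0 sc X k : 0 <= frame_reward tau r sc X k.
Proof. by apply: sumr_ge0 => u _; apply: slot_reward_ge0. Qed.

Lemma frame_reward_le sc X k : frame_reward tau r sc X k.+1 <= T%:R * r X 1%N.
Proof.
rewrite frame_rewardE -[in leRHS](card_ord T) mulr_natl -sumr_const.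
by apply: ler_sum => u _; apply: slot_reward_le.
Qed.

Lemma total_reward_ge0 sc X t : 0 <= total_reward tau r sc X t.
Proof. by apply: sumr_ge0 => u _; apply: slot_reward_ge0. Qed.

Lemma total_reward_homo sc X :
  {homo total_reward tau r sc X : m n / (m <= n)%N >-> m <= n}.
Proof.
move=> t1 t2 le_t12.
rewrite /total_reward (big_cat_nat (m := 0) (n := t1) (p := t2)) //=.
by rewrite lerDl; apply: sumr_ge0 => u _; apply: slot_reward_ge0.
Qed.

Definition prefix_reward X n := \sum_(j < n) r X j.+1.

(* How far ahead, in the current period, a schedule that has executed [X]
   [a] times is of one that has executed it [b] times. *)
Definition excess_reward X a b := prefix_reward X a - prefix_reward X (minn a b).

Lemma prefix_rewardS X n : prefix_reward X n.+1 = prefix_reward X n + r X n.+1.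
Proof. by rewrite /prefix_reward big_ord_recr. Qed.

Lemma prefix_reward_homo X n m :
  (n <= m)%N -> (m <= tau X)%N -> prefix_reward X n <= prefix_reward X m.
Proof.
elim: m => [|m IH]; first by rewrite leqn0 => /eqP ->.
rewrite leq_eqVlt => /orP[/eqP -> //|]; rewrite ltnS => le_nm lt_mtau.
rewrite prefix_rewardS (le_trans (IH le_nm (ltnW lt_mtau))) // lerDl.
by rewrite r_ge0.
Qed.

Lemma excess_reward_ge0 X a b : (a <= tau X)%N -> 0 <= excess_reward X a b.
Proof. by move=> a_le; rewrite subr_ge0 prefix_reward_homo // geq_minl. Qed.

(* The bound [r X a.+1] on the right relies on rewards being nonincreasing
   when the second schedule is behind ([a <= b]). *)
Lemma excess_reward_step X a b (ea eb : bool) : (a < tau X)%N -> (b < tau X)%N ->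
  (if eb then r X b.+1 else 0) + excess_reward X (a + ea) (b + eb)
    - excess_reward X a b - (if ea then r X a.+1 else 0)
  <= (if eb then r X a.+1 else 0).
Proof.
move=> lt_a lt_b.
have ra : 0 <= r X a.+1 by rewrite r_ge0.
have rb : 0 <= r X b.+1 by rewrite r_ge0.
have rab : (a <= b)%N -> r X b.+1 <= r X a.+1 by move=> le_ab; rewrite r_homo.
rewrite /excess_reward; case: ea; case: eb; rewrite ?addn1 ?addn0.
- rewrite (_ : minn a.+1 b.+1 = (minn a b).+1); last by lia.
  rewrite !prefix_rewardS; case: (leqP a b) => [le_ab|lt_ba].
    by have := rab le_ab; lra.
  lra.
- case: (leqP b a) => [le_ba|lt_ab].
    by rewrite (_ : minn a.+1 b = b) ?prefix_rewardS; [lra | lia].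
  by rewrite (_ : minn a.+1 b = a.+1) ?prefix_rewardS; [lra | lia].
- case: (leqP a b) => [le_ab|lt_ba].
    by rewrite (_ : minn a b.+1 = a); [have := rab le_ab; lra | lia].
  by rewrite (_ : minn a b.+1 = b.+1) ?prefix_rewardS; [lra | lia].
- lra.
Qed.

Definition greedy_slot (sc : schedule S) (d : S -> R) (t : nat) :=
  exists Y, sc t = Some Y /\
    forall X, r X (nexec tau sc X t).+1 * d X <= r Y (nexec tau sc Y t).+1 * d Y.

(* Slot [mg + w] of [g] is compared with slot [mo + w] of [o]; since [mg] and
   [mo] are multiples of every period, the periods of both schedules align. *)
Section FramePair.
Variables (g o : schedule S) (mg mo : nat) (d : S -> R).
Hypotheses (dvdn_mg : forall X, (tau X %| mg)%N) (dvdn_mo : forall X, (tau X %| mo)%N).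
Hypothesis d_ge0 : forall X, 0 <= d X.

Let excess X w :=
  excess_reward X (nexec tau g X (mg + w)) (nexec tau o X (mo + w)).

Lemma excess_slot_step X w :
  slot_reward tau r o X (mo + w) + excess X w.+1 - excess X w
  <= slot_reward tau r g X (mg + w)
     + (if o (mo + w) == Some X then r X (nexec tau g X (mg + w)).+1 else 0).
Proof.
have lt_a := nexec_lt_period g X (mg + w); have lt_b := nexec_lt_period o X (mo + w).
have := excess_reward_step X _ _ (g (mg + w) == Some X) (o (mo + w) == Some X) lt_a lt_b.
have excess_le : excess X w.+1 <= excess_reward X
    (nexec tau g X (mg + w) + (g (mg + w) == Some X))
    (nexec tau o X (mo + w) + (o (mo + w) == Some X)).
  rewrite /excess !addnS !nexecS.
  have -> : (tau X %| (mo + w).+1)%N = (tau X %| (mg + w).+1)%N.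
    by rewrite -!addnS !dvdn_addr.
  case: ifP => // _; rewrite /excess_reward minnn subrr excess_reward_ge0 //.
  by rewrite (leq_trans (leq_add (leqnn _) (leq_b1 _))) // addn1.
move: excess_le; rewrite /slot_reward /excess.
by case: (g (mg + w) == Some X); case: (o (mo + w) == Some X) => /=; lra.
Qed.

(* The other schedule's extra term is paid by the greedy choice in slot [w]. *)
Lemma weighted_excess_slot_step w : greedy_slot g d (mg + w) ->
  \sum_X d X * (slot_reward tau r o X (mo + w) + excess X w.+1 - excess X w)
  <= 2 * \sum_X d X * slot_reward tau r g X (mg + w).
Proof.
move=> [Y [gY Y_max]].
have greedy_sum : \sum_X d X * slot_reward tau r g X (mg + w)
    = d Y * r Y (nexec tau g Y (mg + w)).+1.
  by rewrite /slot_reward sum_mul_if_some gY.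
have other_sum : \sum_X d X *
    (if o (mo + w) == Some X then r X (nexec tau g X (mg + w)).+1 else 0)
    <= d Y * r Y (nexec tau g Y (mg + w)).+1.
  rewrite sum_mul_if_some; case: (o (mo + w)) => [Z|] /=.
    by rewrite mulrC (mulrC (d Y)) Y_max.
  by rewrite mulr_ge0 // r_ge0 // nexec_lt_period.
apply: le_trans (ler_sum _ (fun X _ => ler_wpM2l (d_ge0 X) (excess_slot_step X w))) _.
by under eq_bigr do rewrite mulrDr; rewrite big_split /= greedy_sum; lra.
Qed.

Lemma weighted_frame_2approx N :
  (forall u, (u < N)%N -> greedy_slot g d (mg + u)) ->
  \sum_X d X * \sum_(u < N) slot_reward tau r o X (mo + u)
  <= 2 * \sum_X d X * \sum_(u < N) slot_reward tau r g X (mg + u).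
Proof.
move=> greedy.
have potential w : (w <= N)%N ->
    \sum_X d X * (\sum_(u < w) slot_reward tau r o X (mo + u) + excess X w)
    <= 2 * \sum_X d X * \sum_(u < w) slot_reward tau r g X (mg + u).
  elim: w => [_|w IH lt_wN].
    have excess0 X : excess X 0 = 0.
      by rewrite /excess !addn0 !nexec_period_start // /excess_reward minnn subrr.
    by rewrite !big1 ?mulr0 // => X _; rewrite big_ord0 ?excess0 ?addr0 mulr0.
  have := IH (ltnW lt_wN); have := weighted_excess_slot_step _ (greedy w lt_wN).
  have -> : \sum_X d X * (\sum_(u < w.+1) slot_reward tau r o X (mo + u) + excess X w.+1)
      = \sum_X d X * (\sum_(u < w) slot_reward tau r o X (mo + u) + excess X w)
        + \sum_X d X * (slot_reward tau r o X (mo + w) + excess X w.+1 - excess X w).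
    by rewrite -big_split; apply: eq_bigr => X _; rewrite big_ord_recr /=; ring.
  have -> : \sum_X d X * \sum_(u < w.+1) slot_reward tau r g X (mg + u)
      = \sum_X d X * \sum_(u < w) slot_reward tau r g X (mg + u)
        + \sum_X d X * slot_reward tau r g X (mg + w).
    by rewrite -big_split; apply: eq_bigr => X _; rewrite big_ord_recr mulrDr.
  lra.
apply: le_trans (potential N (leqnn N)); apply: ler_sum => X _.
by rewrite ler_wpM2l // lerDl excess_reward_ge0 // ltnW // nexec_lt_period.
Qed.

End FramePair.

Lemma greedy_maximizer_frame q sc sc' K j : greedy_maximizer tau r q sc ->
  \sum_X debt tau r q sc X K * frame_reward tau r sc' X j.+1
  <= 2 * \sum_X debt tau r q sc X K * frame_reward tau r sc X K.+1.
Proof.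
move=> greedy; under eq_bigr do rewrite frame_rewardE.
under [in leRHS]eq_bigr do rewrite frame_rewardE.
apply: weighted_frame_2approx => [X|X|X|u lt_uT]; rewrite ?debt_ge0 ?dvdn_mull ?dvdn_frameT //.
by have := greedy (K * T + u)%N; rewrite divnMDl ?frameT_gt0 // divn_small // addn0.
Qed.

Lemma exists_frame_weighted_ge sc (p d : S -> R) : (forall X, 0 <= d X) ->
  (forall X, ((p X)%:E < avg_reward tau r sc X)%E) ->
  exists k, \sum_X d X * p X <= \sum_X d X * frame_reward tau r sc X k.+1.
Proof.
move=> d_ge0 p_lt.
have [N _ p_lt_ratio] := filter_forall _ (fun X => @lt_limn_einf_near R _ _ (p_lt X)).
have total_ge X : N.+1%:R * p X <= total_reward tau r sc X (N.+1 * T)%N.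
  have := p_lt_ratio (N.+1 * T)%N (leq_trans (leqnSn N) (leq_pmulr _ frameT_gt0)) X.
  rewrite lte_fin natrM mulfK ?pnatr_eq0 -?lt0n ?frameT_gt0 // ltr_pdivlMr ?ltr0n //.
  by rewrite mulrC => /ltW.
have [k k_ge] : exists k : 'I_N.+1,
    \sum_X d X * p X <= \sum_X d X * frame_reward tau r sc X k.+1.
  apply: exists_ge_average; rewrite exchange_big mulr_sumr /=; apply: ler_sum => X _.
  by rewrite -mulr_sumr -total_reward_frames mulrCA ler_wpM2l.
by exists k.
Qed.

Lemma debt_sqr_drift q sc K : (forall X, 0 <= q X) ->
  \sum_X debt tau r q sc X K.+1 ^+ 2
  <= \sum_X debt tau r q sc X K ^+ 2 + 2 * \sum_X debt tau r q sc X K * q X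
     - 2 * \sum_X debt tau r q sc X K * frame_reward tau r sc X K.+1
     + \sum_X (q X ^+ 2 + (T%:R * r X 1%N) ^+ 2).
Proof.
move=> q_ge0; rewrite !mulr_sumr -big_split -sumrB -big_split /=; apply: ler_sum => X _.
have f_ge0 := frame_reward_ge0 sc X K.+1.
have f_sqr : frame_reward tau r sc X K.+1 ^+ 2 <= (T%:R * r X 1%N) ^+ 2.
  by rewrite !expr2 ler_pM // frame_reward_le.
have := sqr_max0_subr_le (debt tau r q sc X K) (q_ge0 X) f_ge0.
by rewrite -/(debt tau r q sc X K.+1); lra.
Qed.

Lemma debt_bounded_of_frame_gain q sc (eps : R) : (forall X, 0 < q X) -> 0 < eps ->
  (forall K, (2 + eps) * \sum_X debt tau r q sc X K * q X
             <= 2 * \sum_X debt tau r q sc X K * frame_reward tau r sc X K.+1) ->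
  exists D, forall K X, debt tau r q sc X K <= D.
Proof.
move=> q_gt0 eps_gt0 gain.
pose L K := \sum_X debt tau r q sc X K ^+ 2.
pose C := \sum_X (q X ^+ 2 + (T%:R * r X 1%N) ^+ 2).
pose B := \sum_X (C / (eps * q X)) ^+ 2.
have C_ge0 : 0 <= C by apply: sumr_ge0 => X _; rewrite addr_ge0 ?sqr_ge0.
have B_ge0 : 0 <= B by apply: sumr_ge0 => X _; apply: sqr_ge0.
have dq_ge0 K X : 0 <= debt tau r q sc X K * q X by rewrite mulr_ge0 ?debt_ge0 ?ltW.
have L_le K : L K <= B + C.
  apply: (@drift_bounded _ L (fun K => eps * \sum_X debt tau r q sc X K * q X)).
  - by rewrite /L big1 ?addr_ge0 // => X _; rewrite expr0n.
  - by move=> {}K; rewrite mulr_ge0 ?sumr_ge0 ?ltW.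
  - move=> {}K small; apply: ler_sum => X _.
    have dX_ge0 := debt_ge0 q sc X K; have qX_gt0 := q_gt0 X.
    have bound_gt0 : 0 < eps * q X by rewrite mulr_gt0.
    rewrite ler_pXn2r ?nnegrE ?divr_ge0 ?(ltW bound_gt0) // ler_pdivlMr //.
    have := ler_wpM2l (ltW eps_gt0) (ler_sum_term X (dq_ge0 K)); nra.
  - move=> {}K; have := debt_sqr_drift q sc K (fun X => ltW (q_gt0 X)).
    by have := gain K; rewrite mulrDl /L /C; lra.
exists (B + C + 1) => K X; have := L_le K.
have := ler_sum_term X (fun Y => sqr_ge0 (debt tau r q sc Y K)); rewrite -/(L K); nra.
Qed.

Lemma fulfills_of_debt_bounded q sc D :
  (forall K X, debt tau r q sc X K <= D) -> fulfills tau r q sc.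
Proof.
move=> debt_le X; apply: (@limn_einf_ratio_ge _ _ _ _ D frameT_gt0).
- exact: total_reward_ge0.
- exact: total_reward_homo.
- by move=> K; apply: le_trans (total_reward_ge_debt q sc X K); rewrite lerD2l lerN2.
Qed.

Lemma greedy_maximizer_2approx q : (forall X, 0 < q X) ->
  strictly_feasible tau r (fun X => 2 * q X) ->
  forall sc, greedy_maximizer tau r q sc -> fulfills tau r q sc.
Proof.
move=> q_gt0 [eps [eps_gt0 [sc' fulfills']]] sc greedy.
have p_lt X : (((2 + eps) * q X)%:E < avg_reward tau r sc' X)%E.
  by apply: lt_le_trans (fulfills' X); rewrite lte_fin; have := q_gt0 X; nra.
have frame_gain K : (2 + eps) * \sum_X debt tau r q sc X K * q X
    <= 2 * \sum_X debt tau r q sc X K * frame_reward tau r sc X K.+1.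
  have [j gain_j] := exists_frame_weighted_ge _ _ _ (fun X => debt_ge0 q sc X K) p_lt.
  apply: le_trans (greedy_maximizer_frame q sc sc' K j greedy).
  by rewrite mulr_sumr; under eq_bigr do rewrite mulrCA.
have [D debt_le] := debt_bounded_of_frame_gain q sc eps q_gt0 eps_gt0 frame_gain.
exact: fulfills_of_debt_bounded debt_le.
Qed.

End Scheduling.

Theorem theorem9 (R : realType) (S : finType) (tau : S -> nat)
  (r : S -> nat -> R) (q : S -> R) :
  (forall X, (0 < tau X)%N) ->
  (forall X i, (1 <= i <= tau X)%N -> 0 <= r X i) ->
  (forall X i j, (1 <= i)%N -> (i <= j)%N -> (j <= tau X)%N -> r X j <= r X i) ->
  (forall X, 0 < q X) ->
  strictly_feasible tau r (fun X => 2 * q X) ->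
  forall sc : schedule S,
    greedy_maximizer tau r q sc -> fulfills tau r q sc.
Proof. by move=> tau_gt0 r_ge0 r_homo; apply: greedy_maximizer_2approx. Qed.
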